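(* Assume that $\theta_n>0$ for all $n$ and that \[ \lim_{n\to\infty}\sum_{j=1}^{n-1}\frac{\theta_j\theta_{n-j}}{\theta_n}=0. \] Then $\lim_{n\to\infty}\mathbb{P}_n(L_1=n)=1$. Consequently $\mathbb{P}_n(K=1)\to1$ and $\mathbb{P}_n(R_j=0)\to1$ for every fixed $j$.
   Context: For $\sigma\in\mathcal{S}_n$ (permutations of $\{1,\dots,n\}$), $R_j(\sigma)$ is the number of cycles of length $j$, $L_1(\sigma)$ the length of the cycle containing $1$, and $K(\sigma)=\sum_jR_j(\sigma)$ the number of cycles. Given parameters $\theta_j\ge0$, $h_0=1$, $h_n=\frac1{n!}\sum_{\sigma\in\mathcal{S}_n}\prod_{j}\theta_j^{R_j(\sigma)}$, and $\mathbb{P}_n(\sigma)=\frac1{n!h_n}\prod_j\theta_j^{R_j(\sigma)}$. *)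

(* Theta takes values in an arbitrary real field R
   (the reals being the intended instance). *)
From HB Require Import structures.
From mathcomp Require Import all_boot all_order all_algebra all_fingroup.
Set Implicit Arguments. Unset Strict Implicit. Unset Printing Implicit Defensive.
Import Order.TTheory GRing.Theory Num.Theory.
Local Open Scope ring_scope.

(* Permutations of {1,...,n} are 'S_n = {perm 'I_n}; the point 1 is ord0. *)

Definition Rj (n j : nat) (s : 'S_n) : nat :=
  #|[set c in porbits s | #|c| == j]|.

Definition Kc (n : nat) (s : 'S_n) : nat := #|porbits s|.

Definition L1 (n : nat) (s : 'S_n.+1) : nat := #|porbit s ord0|.

(* prod_j theta_j^{R_j(s)}  (j ranges over 1..n; R_j = 0 for j > n) *)
Definition weight (R : realFieldType) (theta : nat -> R) (n : nat) (s : 'S_n) : R :=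
  \prod_(1 <= j < n.+1) theta j ^+ Rj j s.

Definition hn (R : realFieldType) (theta : nat -> R) (n : nat) : R :=
  (n`!%:R)^-1 * \sum_(s : 'S_n) weight theta s.

Definition Pn (R : realFieldType) (theta : nat -> R) (n : nat) (s : 'S_n) : R :=
  weight theta s / (n`!%:R * hn theta n).

Definition Prob (R : realFieldType) (theta : nat -> R) (n : nat) (A : pred 'S_n) : R :=
  \sum_(s : 'S_n | A s) Pn theta s.

Definition converges (R : realFieldType) (u : nat -> R) (l : R) : Prop :=
  forall eps : R, 0 < eps -> exists N : nat, forall n : nat, (N <= n)%N -> `|u n - l| < eps.

(* Write V(B) for the total weight of the permutations of a finite set B, so that
   V({1..n}) = n! h_n, and c(B) for the number of cyclic permutations of B.  Splitting off
   the cycle A through a point x gives V(B) = sum_(x in A, A <= B) c(A) theta_|A| V(B \ A).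
   The permutations of B with exactly two cycles, the one through x being A, number
   c(A) c(B \ A); joining the two cycles by a transposition (x y) is injective once the
   size of the cycle of x is fixed, so sum_(A < B) c(A) c(B \ A) g(|A|) <= c(B) sum_j g(j).
   By strong induction on |B| this yields V(B) <= (1 + K_n eps_(n+1)) c(B) theta_(n+1),
   where eps is the ratio of the hypothesis and K a running bound that stays bounded
   because eps tends to 0.  As P_n(L_1 = n) = c theta_n / V, this probability tends to 1,
   and on that event there is a single cycle. *)

From HB Require Import structures.
From mathcomp Require Import all_boot all_order all_algebra all_fingroup ring.
Import Order.TTheory GRing.Theory Num.Theory.

Set Implicit Arguments. Unset Strict Implicit. Unset Printing Implicit Defensive.

Section PermCycles.

Variable T : finType.
Implicit Types (s t : {perm T}) (x y z : T) (A B : {set T}).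
Local Open Scope group_scope.

Lemma mem_porbitS s x z : (s z \in porbit s x) = (z \in porbit s x).
Proof.
have := porbit_perm s 1 z; rewrite expg1 => Esz.
by rewrite -(eq_porbit_mem s (s z)) Esz eq_porbit_mem.
Qed.

Lemma porbit_astabs s x : s \in 'N(porbit s x | 'P).
Proof. by apply/astabsP => z; apply: mem_porbitS. Qed.

Lemma porbit_sub_closed s x B :
  x \in B -> {in B, forall z, s z \in B} -> porbit s x \subset B.
Proof.
move=> xB sB; apply/subsetP => _ /porbitP[i ->].
by elim: i => [|i IHi]; rewrite ?expg0 ?perm1 // expgSr permM sB.
Qed.

Lemma porbit_sub_perm_on s x B : perm_on B s -> x \in B -> porbit s x \subset B.
Proof. by move=> sB xB; apply: porbit_sub_closed => // z zB; rewrite perm_closed. Qed.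

Lemma eq_porbit_on s t x : {in porbit t x, s =1 t} -> porbit s x = porbit t x.
Proof.
move=> st; have iterE i : (s ^+ i) x = (t ^+ i) x.
  by elim: i => [|i IHi]; rewrite ?expg0 // !expgSr !permM IHi st ?mem_porbit.
by apply/setP => z; apply/porbitP/porbitP => -[i ->]; exists i; rewrite iterE.
Qed.

Lemma porbit_porbits s x : porbit s x \in porbits s.
Proof. exact: imset_f. Qed.

Lemma porbits_porbit s x A : x \in A -> A \in porbits s -> porbit s x = A.
Proof. by move=> xA /imsetP[z _ Az]; apply/eqP; rewrite Az eq_porbit_mem -Az. Qed.

Lemma set0_notin_porbits s : set0 \notin porbits s.
Proof. by apply/imsetP => -[z _ /setP/(_ z)]; rewrite porbit_id inE. Qed.

Lemma iter_porbit_inj s x i j :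
  (i < #|porbit s x|)%N -> (j < #|porbit s x|)%N -> iter i s x = iter j s x -> i = j.
Proof.
move=> ilt jlt Eij; apply/eqP.
rewrite -(nth_uniq x _ _ (uniq_traject_porbit s x)) ?size_traject //.
by rewrite !nth_traject // Eij.
Qed.

Lemma iter_porbit_neq s x i : (0 < i < #|porbit s x|)%N -> iter i s x != x.
Proof.
case/andP => i_gt0 ilt; apply: contraTneq i_gt0 => Ei.
by rewrite (iter_porbit_inj (j := 0) ilt (leq_ltn_trans _ ilt) Ei).
Qed.

Lemma card_porbit_period s x d :
  (0 < d)%N -> iter d s x = x -> (forall i, (0 < i < d)%N -> iter i s x != x) ->
  #|porbit s x| = d.
Proof.
move=> d_gt0 sdx dmin; have m_gt0 : (0 < #|porbit s x|)%N by rewrite lt0n card_porbit_neq0.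
case: (ltngtP #|porbit s x| d) => // [md|dm].
  by have := dmin _ (introT andP (conj m_gt0 md)); rewrite iter_porbit eqxx.
by have := @iter_porbit_neq s x d; rewrite d_gt0 dm sdx eqxx => /(_ isT).
Qed.

Lemma porbit_mul_tperm_merge s x y :
  y \notin porbit s x -> porbit (tperm x y * s) x = porbit s x :|: porbit s y.
Proof.
move=> yNx; set t := tperm x y * s.
have xNy : x \notin porbit s y by rewrite porbit_sym.
have iter_t i : (0 < i <= #|porbit s y|)%N -> iter i t x = iter i s y.
  elim: i => [//|[|i] IHi] /andP[_ ilt]; first by rewrite /= permM tpermL.
  rewrite iterS IHi ?ilt ?(ltnW ilt) //= -iterS permM tpermD //.
    by apply: contraNneq xNy => ->; rewrite -permX mem_porbit.
  by rewrite eq_sym iter_porbit_neq ?ilt.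
have y_t : y \in porbit t x.
  apply/porbitP; exists #|porbit s y|; rewrite permX iter_t ?iter_porbit //.
  by rewrite leqnn lt0n card_porbit_neq0.
have t_closed z : z \in porbit t x -> s z \in porbit t x.
  have -> : s z = t (tperm x y z) by rewrite permM tpermK.
  by move=> zt; rewrite mem_porbitS; case: tpermP => // _; rewrite porbit_id.
apply/eqP; rewrite eqEsubset; apply/andP; split.
  apply: porbit_sub_closed => [|z]; first by rewrite inE porbit_id.
  rewrite permM !inE !mem_porbitS.
  by case: tpermP => [_|_|//] _; rewrite porbit_id ?orbT.
by apply/subsetP => z; rewrite inE => /orP[] /(subsetP (porbit_sub_closed _ t_closed)) ->;
  rewrite ?porbit_id.
Qed.

Lemma card_porbit_mul_tperm_iter s x p :
  (0 < p < #|porbit s x|)%N ->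
  #|porbit (tperm x (iter p s x) * s) x| = (#|porbit s x| - p)%N.
Proof.
set m := #|porbit s x|; set t := tperm x (iter p s x) * s.
case/andP => p_gt0 pm.
have iter_t i : (0 < i <= m - p)%N -> iter i t x = iter (p + i) s x.
  elim: i => [//|[|i] IHi] /andP[_ ilt]; first by rewrite /= permM tpermL addn1.
  have pi_lt : (p + i.+1 < m)%N by rewrite -ltn_subRL.
  rewrite iterS IHi ?ilt ?(ltnW ilt) // [in RHS]addnS [in RHS]iterS permM tpermD //.
    by rewrite eq_sym iter_porbit_neq // pi_lt addn_gt0 p_gt0.
  apply/eqP => /(iter_porbit_inj pm pi_lt)/eqP.
  by rewrite -{1}(addn0 p) eqn_add2l.
apply: card_porbit_period => [||i /andP[i_gt0 ilt]]; first by rewrite subn_gt0.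
  by rewrite iter_t ?subn_gt0 ?pm ?leqnn // subnKC ?(ltnW pm) // iter_porbit.
rewrite iter_t ?i_gt0 ?(ltnW ilt) // iter_porbit_neq // addn_gt0 p_gt0.
by rewrite -ltn_subRL.
Qed.

End PermCycles.

Section CycleDecomposition.

Variable T : finType.
Implicit Types (s : {perm T}) (x z : T) (A B : {set T}).
Local Open Scope group_scope.

Definition cyclic_perms A := [set s : {perm T} | perm_on A s & A \in porbits s].

Definition cycles_in B s := [set c in porbits s | c \subset B].

Lemma astabs_perm A s z : s \in 'N(A | 'P) -> (s z \in A) = (z \in A).
Proof. exact: astabs_act. Qed.

Lemma restr_perm_mul A s : s \in 'N(A | 'P) -> restr_perm A s * restr_perm (~: A) s = s.
Proof.
move=> nAs; have nCs : s \in 'N(~: A | 'P) by rewrite astabsC.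
apply/permP => z; rewrite permM; have [zA|zNA] := boolP (z \in A).
  by rewrite (restr_permE nAs zA) (out_perm (restr_perm_on _ _)) // inE negbK astabs_perm.
by rewrite (out_perm (restr_perm_on _ _) zNA) restr_permE // inE.
Qed.

Lemma restr_perm_porbit s x A B :
  perm_on B s -> porbit s x = A ->
  restr_perm A s \in cyclic_perms A /\ perm_on (B :\: A) (restr_perm (~: A) s).
Proof.
move=> sB Ex; have nAs : s \in 'N(A | 'P) by rewrite -Ex porbit_astabs.
have nCs : s \in 'N(~: A | 'P) by rewrite astabsC.
split; first rewrite inE restr_perm_on /=.
  suff Er : porbit (restr_perm A s) x = A by rewrite -{1}Er porbit_porbits.
  by rewrite -{2}Ex; apply: eq_porbit_on => z; rewrite Ex => zA; rewrite restr_permE.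
apply/subsetP => z; rewrite inE => rz.
have zNA : z \in ~: A.
  by apply: contraNT rz => zA; rewrite (out_perm (restr_perm_on _ _)).
rewrite inE -in_setC zNA (subsetP sB) // inE.
by rewrite -(restr_permE nCs zNA).
Qed.

Lemma restr_perm_mul_cycle s1 s2 x A B :
  x \in A -> A \subset B -> s1 \in cyclic_perms A -> perm_on (B :\: A) s2 ->
  [/\ perm_on B (s1 * s2), porbit (s1 * s2) x = A,
      restr_perm A (s1 * s2) = s1 & restr_perm (~: A) (s1 * s2) = s2].
Proof.
move=> xA AB; rewrite inE => /andP[s1A As1] s2BA.
have s2A z : z \in A -> s2 z = z by move=> zA; rewrite (out_perm s2BA) // inE zA.
have s12A z : z \in A -> (s1 * s2) z = s1 z by move=> zA; rewrite permM s2A ?perm_closed.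
have Ex : porbit (s1 * s2) x = A.
  rewrite -(porbits_porbit xA As1); apply: eq_porbit_on => z.
  by rewrite (porbits_porbit xA As1); apply: s12A.
have nAs : s1 * s2 \in 'N(A | 'P) by rewrite -Ex porbit_astabs.
have nCs : s1 * s2 \in 'N(~: A | 'P) by rewrite astabsC.
split=> //.
- by apply: perm_onM; [apply: subset_trans s1A AB | apply: subset_trans s2BA (subsetDl B A)].
- apply/permP => z; have [zA|zNA] := boolP (z \in A); first by rewrite restr_permE ?s12A.
  by rewrite !(out_perm _ zNA) ?restr_perm_on.
- apply/permP => z; have [zA|zNA] := boolP (z \in A).
    by rewrite s2A // (out_perm (restr_perm_on _ _)) // inE zA.
  have zC : z \in ~: A by rewrite inE.
  by rewrite (restr_permE nCs zC) permM (out_perm s1A zNA).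
Qed.

Lemma big_perm_on_porbit (R : Type) (idx : R) (op : Monoid.com_law idx)
    x A B (F : {perm T} -> R) :
  x \in A -> A \subset B ->
  \big[op/idx]_(s | perm_on B s && (porbit s x == A)) F s =
  \big[op/idx]_(s1 in cyclic_perms A) \big[op/idx]_(s2 | perm_on (B :\: A) s2) F (s1 * s2).
Proof.
move=> xA AB; rewrite pair_big /=.
rewrite (reindex_onto (fun p : {perm T} * {perm T} => p.1 * p.2)
           (fun s => (restr_perm A s, restr_perm (~: A) s))) /=; last first.
  by move=> s /andP[_ /eqP Ex]; rewrite restr_perm_mul // -Ex porbit_astabs.
apply: eq_bigl => -[s1 s2] /=; apply/idP/idP.
  case/andP => /andP[sB /eqP Ex] /eqP[E1 E2].
  by case: (restr_perm_porbit sB Ex); rewrite E1 E2 => -> ->.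
case/andP => s1c s2BA.
by case: (restr_perm_mul_cycle xA AB s1c s2BA) => -> -> -> ->; rewrite !eqxx.
Qed.

Lemma porbit_mul_out s1 s2 A z :
  perm_on A s1 -> perm_on (~: A) s2 -> z \notin A -> porbit (s1 * s2) z = porbit s2 z.
Proof.
move=> s1A s2C zNA; apply: eq_porbit_on => u uz.
have : u \in ~: A by rewrite (subsetP (porbit_sub_perm_on s2C _) u uz) ?inE.
by rewrite inE permM => /(out_perm s1A) ->.
Qed.

Lemma cycles_in_mul_cycle s1 s2 x A B :
  x \in A -> A \subset B -> s1 \in cyclic_perms A -> perm_on (B :\: A) s2 ->
  cycles_in B (s1 * s2) = A |: cycles_in (B :\: A) s2.
Proof.
move=> xA AB s1c s2BA; have [_ Ex _ _] := restr_perm_mul_cycle xA AB s1c s2BA.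
have s1A : perm_on A s1 by move: s1c; rewrite inE => /andP[].
have s2C : perm_on (~: A) s2.
  by apply: subset_trans s2BA _; apply/subsetP => z; rewrite !inE => /andP[].
have porbitA z : z \in A -> porbit (s1 * s2) z = A.
  by move=> zA; rewrite -Ex; apply/eqP; rewrite eq_porbit_mem Ex.
have porbitC z : z \notin A -> porbit s2 z \subset ~: A.
  by move=> zNA; apply: porbit_sub_perm_on; rewrite ?inE.
apply/setP => c; rewrite !inE; apply/andP/orP.
  case=> /imsetP[z _ ->] cB; have [zA|zNA] := boolP (z \in A).
    by left; rewrite porbitA.
  right; rewrite (porbit_mul_out s1A s2C zNA) porbit_porbits /=.
  apply/subsetP => u uz; rewrite inE (subsetP cB) ?andbT.
    by rewrite -in_setC (subsetP (porbitC z zNA)).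
  by rewrite (porbit_mul_out s1A s2C zNA).
case=> [/eqP -> | /andP[/imsetP[z _ ->] zBA]]; first by rewrite -{1}Ex porbit_porbits.
have zNA : z \notin A by have := subsetP zBA z (porbit_id s2 z); rewrite inE => /andP[].
rewrite -(porbit_mul_out s1A s2C zNA) porbit_porbits.
by rewrite (porbit_mul_out s1A s2C zNA) (subset_trans zBA) ?subsetDl.
Qed.

End CycleDecomposition.

Section TwoCyclePerms.

Variable T : finType.
Implicit Types (s t : {perm T}) (x y : T) (A B : {set T}).
Local Open Scope group_scope.

Definition two_cycle_perms B x :=
  [set s : {perm T} | perm_on B s & B :\: porbit s x \in porbits s].

Lemma porbit_proper_two_cycle B x s :
  x \in B -> s \in two_cycle_perms B x -> porbit s x \proper B.
Proof.
move=> xB; rewrite inE properEneq => /andP[sB BxP]; rewrite porbit_sub_perm_on // andbT.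
by apply: contraNneq (set0_notin_porbits s) => Ex; move: BxP; rewrite Ex setDv.
Qed.

Lemma porbit_iter_index t x y :
  y \in porbit t x -> y != x -> exists2 p, (0 < p < #|porbit t x|)%N & y = iter p t x.
Proof.
rewrite porbit_traject => /trajectP[p plt ->] yx; exists p => //.
by rewrite plt andbT lt0n; apply: contraNneq yx => ->.
Qed.

Lemma tperm_mul_card_porbit_inj t x y1 y2 :
  y1 \in porbit t x -> y2 \in porbit t x -> y1 != x -> y2 != x ->
  #|porbit (tperm x y1 * t) x| = #|porbit (tperm x y2 * t) x| -> y1 = y2.
Proof.
move=> /porbit_iter_index h1 /porbit_iter_index h2 /h1[p1 p1lt ->] /h2[p2 p2lt ->].
rewrite !card_porbit_mul_tperm_iter // => /eqP.
case/andP: p1lt => _ /ltnW p1le; case/andP: p2lt => _ /ltnW p2le.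
by rewrite eqn_sub2lE // => /eqP ->.
Qed.

Definition other_cycle_point B s x : T := odflt x [pick y in B :\: porbit s x].

Lemma other_cycle_pointP B s x :
  s \in two_cycle_perms B x -> other_cycle_point B s x \in B :\: porbit s x.
Proof.
rewrite inE => /andP[_ /imsetP[z _ Ez]]; rewrite /other_cycle_point.
by case: pickP => [//|none]; have := none z; rewrite /= Ez porbit_id.
Qed.

Lemma tperm_mul_two_cycle B s x (y := other_cycle_point B s x) :
  x \in B -> s \in two_cycle_perms B x ->
  porbit (tperm x y * s) x = B /\ tperm x y * s \in cyclic_perms B.
Proof.
move=> xB s2; have yBx := other_cycle_pointP s2.
move: s2 (yBx); rewrite !inE => /andP[sB BxP] /andP[yNx yB].
have Et : porbit (tperm x y * s) x = B.
  rewrite porbit_mul_tperm_merge // (porbits_porbit yBx BxP).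
  by rewrite setDE setUIr setUCr setIT; apply/setUidPr; apply: porbit_sub_perm_on.
split=> //; rewrite -{2}Et porbit_porbits andbT perm_onM //.
by apply: subset_trans (tperm_on x y) _; rewrite subUset !sub1set xB.
Qed.

Lemma card_two_cycle_perms_size B x j : x \in B ->
  (#|[set s in two_cycle_perms B x | #|porbit s x| == j]| <= #|cyclic_perms B|)%N.
Proof.
move=> xB; set S := [set s in _ | _]; pose y s := other_cycle_point B s x.
pose f s := tperm x (y s) * s.
have fS s : s \in S -> [/\ porbit (f s) x = B, f s \in cyclic_perms B,
                          y s \in B, y s != x & #|porbit s x| = j].
  rewrite inE => /andP[s2 /eqP sj]; have [Et tB] := tperm_mul_two_cycle xB s2.
  have := other_cycle_pointP s2; rewrite inE => /andP[yNx yB]; split=> //.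
  by rewrite /y; apply: contraNneq yNx => ->; apply: porbit_id.
have s_f s : s = tperm x (y s) * f s by rewrite mulgA tperm2 mul1g.
rewrite -(card_in_imset (f := f)); last first.
  move=> s1 s2 /fS[E1 _ y1B y1x c1] /fS[_ _ y2B y2x c2] Ef.
  suff y12 : y s1 = y s2 by rewrite (s_f s1) (s_f s2) Ef y12.
  apply: (@tperm_mul_card_porbit_inj (f s1) x); rewrite ?E1 //.
  by rewrite -(s_f s1) Ef -(s_f s2) c1 c2.
by apply/subset_leq_card/subsetP => _ /imsetP[s /fS[_ ? _ _ _] ->].
Qed.

Lemma porbits_mul_cycle_setD s1 s2 x A B :
  x \in A -> A \subset B -> s1 \in cyclic_perms A -> perm_on (B :\: A) s2 ->
  (B :\: A \in porbits (s1 * s2)) = (B :\: A \in porbits s2).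
Proof.
move=> xA AB s1c s2BA; have := cycles_in_mul_cycle xA AB s1c s2BA.
move/setP/(_ (B :\: A)); rewrite !inE subsetDl subxx !andbT => ->.
suff /negbTE -> : B :\: A != A by [].
by apply/eqP => /setP/(_ x); rewrite !inE xA.
Qed.

Lemma card_cyclic_perms C :
  #|cyclic_perms C| = (\sum_(s : {perm T} | perm_on C s) (C \in porbits s))%N.
Proof.
rewrite -sum1_card (eq_bigl (fun s => perm_on C s && (C \in porbits s))) => [|s].
  by rewrite big_mkcondr; apply: eq_bigr => s _; case: (_ \in _).
by rewrite inE.
Qed.

Lemma card_two_cycle_perms_porbit x A B : x \in A -> A \subset B ->
  #|[set s in two_cycle_perms B x | porbit s x == A]| =
  (#|cyclic_perms A| * #|cyclic_perms (B :\: A)|)%N.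
Proof.
move=> xA AB; rewrite -sum1_card.
transitivity (\sum_(s | perm_on B s && (porbit s x == A)) (B :\: A \in porbits s))%N.
  rewrite big_mkcond [RHS]big_mkcond; apply: eq_bigr => s _; rewrite !inE.
  case: (porbit s x =P A) => [->|_]; rewrite ?andbF ?andbT //.
  by case: (perm_on B s); case: (_ \in _).
rewrite (big_perm_on_porbit _ _ xA AB) -sum_nat_const; apply: eq_bigr => s1 s1c.
rewrite card_cyclic_perms; apply: eq_bigr => s2 s2BA.
by rewrite (porbits_mul_cycle_setD xA AB s1c s2BA).
Qed.

End TwoCyclePerms.

Local Open Scope ring_scope.

Section CycleWeights.

Variables (R : realFieldType) (th : nat -> R) (T : finType).
Hypothesis th_pos : forall n, (0 < n)%N -> 0 < th n.
Implicit Types (s : {perm T}) (x : T) (A B : {set T}).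

(* Cycles not contained in B are the fixed points outside B of a permutation on B. *)
Definition cycle_weight B s : R := \prod_(c in cycles_in B s) th #|c|.

Definition total_weight B : R := \sum_(s | perm_on B s) cycle_weight B s.

Lemma cycle_weight_gt0 B s : 0 < cycle_weight B s.
Proof.
apply: prodr_gt0 => _ /setIdP[/imsetP[z _ ->] _].
by apply: th_pos; rewrite lt0n card_porbit_neq0.
Qed.

Lemma total_weight_gt0 B : 0 < total_weight B.
Proof.
rewrite /total_weight (bigD1 1%g) ?perm_on1 //= ltr_wpDr ?cycle_weight_gt0 //.
by apply: sumr_ge0 => s _; apply/ltW/cycle_weight_gt0.
Qed.

Lemma cycles_in0 s : cycles_in set0 s = set0.
Proof.
apply/setP => c; rewrite !inE subset0; apply/negP => /andP[cP /eqP c0].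
by move: cP; rewrite c0 (negbTE (set0_notin_porbits s)).
Qed.

Lemma cycle_weight_mul_cycle s1 s2 x A B :
  x \in A -> A \subset B -> s1 \in cyclic_perms A -> perm_on (B :\: A) s2 ->
  cycle_weight B (s1 * s2)%g = th #|A| * cycle_weight (B :\: A) s2.
Proof.
move=> xA AB s1c s2BA; rewrite /cycle_weight (cycles_in_mul_cycle xA AB s1c s2BA).
rewrite big_setU1 //= inE negb_and; apply/orP; right.
by apply/subsetPn; exists x; rewrite // inE xA.
Qed.

Lemma cycle_weight_cyclic s x B :
  x \in B -> s \in cyclic_perms B -> cycle_weight B s = th #|B|.
Proof.
move=> xB sB; have := cycle_weight_mul_cycle xB (subxx B) sB (perm_on1 _).
by rewrite mulg1 setDv /cycle_weight cycles_in0 big_set0 mulr1.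
Qed.

Lemma total_weight0 : total_weight set0 = 1.
Proof.
rewrite /total_weight (big_pred1 1%g) => [|s].
  by rewrite /cycle_weight cycles_in0 big_set0.
apply/idP/eqP => [s0|->]; last exact: perm_on1.
by apply: perm_on_id s0 _; rewrite cards0.
Qed.

Lemma total_weight_rec x B : x \in B ->
  total_weight B = \sum_(A : {set T} | (A \subset B) && (x \in A))
                     #|cyclic_perms A|%:R * th #|A| * total_weight (B :\: A).
Proof.
move=> xB; rewrite /total_weight.
rewrite (partition_big (fun s => porbit s x)
                      (fun A : {set T} => (A \subset B) && (x \in A))) /=;
  last by move=> s sB; rewrite porbit_sub_perm_on // porbit_id.
apply: eq_bigr => A /andP[AB xA]; rewrite (big_perm_on_porbit _ _ xA AB).
rewrite (eq_bigr (fun=> th #|A| * \sum_(s | perm_on (B :\: A) s) cycle_weight (B :\: A) s)).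
  by rewrite sumr_const -mulrA mulr_natl.
move=> s1 s1c; rewrite mulr_sumr; apply: eq_bigr => s2 s2BA.
exact: cycle_weight_mul_cycle xA AB s1c s2BA.
Qed.

Lemma sum_cyclic_splits (g : nat -> R) x B : x \in B ->
  \sum_(A : {set T} | (A \subset B) && (x \in A) && (A != B))
     #|cyclic_perms A|%:R * #|cyclic_perms (B :\: A)|%:R * g #|A| =
  \sum_(s in two_cycle_perms B x) g #|porbit s x|.
Proof.
move=> xB; rewrite [RHS](partition_big (fun s => porbit s x)
  (fun A : {set T} => (A \subset B) && (x \in A) && (A != B))) /=; last first.
  move=> s /(porbit_proper_two_cycle xB); rewrite properEneq porbit_id andbT.
  by case/andP => -> ->.
apply: eq_bigr => A /andP[/andP[AB xA] _].
rewrite (eq_bigr (fun=> g #|A|)) => [|s /andP[_ /eqP ->]]; last by [].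
rewrite (eq_bigl [in [set s in two_cycle_perms B x | porbit s x == A]]) => [|s].
  by rewrite sumr_const card_two_cycle_perms_porbit // -natrM mulr_natl.
by rewrite !inE.
Qed.

Lemma sum_two_cycle_perms_le (g : nat -> R) x B :
  (forall j, (0 < j < #|B|)%N -> 0 <= g j) -> x \in B ->
  \sum_(s in two_cycle_perms B x) g #|porbit s x| <=
  #|cyclic_perms B|%:R * \sum_(1 <= j < #|B|) g j.
Proof.
move=> g_ge0 xB.
have size_lt s : s \in two_cycle_perms B x -> (0 < #|porbit s x| < #|B|)%N.
  by move/(porbit_proper_two_cycle xB)/proper_card ->; rewrite lt0n card_porbit_neq0.
rewrite (eq_bigr (fun s => \sum_(1 <= j < #|B|) if j == #|porbit s x| then g j else 0));
  last by move=> s /size_lt slt; rewrite -big_mkcond big_nat1_eq slt.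
rewrite exchange_big /= mulr_sumr; apply: ler_sum_nat => j /andP[j_gt0 jlt].
rewrite -big_mkcondr /=.
rewrite (eq_bigl [in [set s in two_cycle_perms B x | #|porbit s x| == j]]) => [|s]; last first.
  by rewrite !inE eq_sym.
rewrite sumr_const -[X in X <= _]mulr_natl ler_wpM2r ?g_ge0 ?j_gt0 // ler_nat.
exact: card_two_cycle_perms_size.
Qed.

End CycleWeights.

Section RatioBound.

Variables (R : realFieldType) (th : nat -> R).
Hypothesis th_pos : forall n, (0 < n)%N -> 0 < th n.

Definition split_ratio n : R := \sum_(1 <= j < n) th j * th (n - j)%N / th n.

(* Starting at 2 makes the sequence stationary as soon as split_ratio stays below 1/2. *)
Fixpoint ratio_bound n : R :=
  if n is m.+1 then Num.max (ratio_bound m) (1 + ratio_bound m * split_ratio m.+1) else 2.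

Lemma split_ratio_ge0 n : 0 <= split_ratio n.
Proof.
rewrite /split_ratio big_nat_cond; apply: sumr_ge0 => j /andP[/andP[j_gt0 jn] _].
apply: divr_ge0; last by apply/ltW/th_pos/(leq_ltn_trans (leq0n j) jn).
by apply/mulr_ge0; apply/ltW/th_pos; rewrite ?subn_gt0.
Qed.

Lemma ratio_bound_ge2 n : 2 <= ratio_bound n.
Proof. by elim: n => [|n IHn] //=; rewrite le_max IHn. Qed.

Lemma ratio_bound_step n : 1 + ratio_bound n * split_ratio n.+1 <= ratio_bound n.+1.
Proof. by rewrite /= le_max lexx orbT. Qed.

Lemma ratio_bound_homo : {homo ratio_bound : m n / (m <= n)%N >-> m <= n}.
Proof.
move=> m n /subnK <-; elim: (n - m)%N => [|k IHk] //=.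
by rewrite (le_trans IHk) // le_max lexx.
Qed.

Lemma total_weight_le (T : finType) n (B : {set T}) : #|B| = n.+1 ->
  total_weight th B <=
  (1 + ratio_bound n * split_ratio n.+1) * (#|cyclic_perms B|%:R * th n.+1).
Proof.
elim/ltn_ind: n T B => n IHn T B cardB.
have [x xB] : exists x, x \in B by apply/set0Pn; rewrite -card_gt0 cardB.
rewrite (total_weight_rec th xB) (bigD1 B) /=; last by rewrite subxx xB.
rewrite setDv total_weight0 mulr1 cardB mulrDl mul1r lerD2l.
have term_le (A : {set T}) : (A \subset B) && (x \in A) && (A != B) ->
    #|cyclic_perms A|%:R * th #|A| * total_weight th (B :\: A) <=
    ratio_bound n * (#|cyclic_perms A|%:R * #|cyclic_perms (B :\: A)|%:R *
                     (th #|A| * th (n.+1 - #|A|)%N)).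
  case/andP => /andP[AB xA] AnB.
  have A_gt0 : (0 < #|A|)%N by rewrite card_gt0; apply/set0Pn; exists x.
  have Alt : (#|A| < n.+1)%N by rewrite -cardB proper_card // properEneq AnB.
  have cardBA : #|B :\: A| = (n - #|A|).+1 by rewrite cardsD cardB (setIidPr AB) subSn.
  have VBA : total_weight th (B :\: A) <=
              ratio_bound n * (#|cyclic_perms (B :\: A)|%:R * th (n.+1 - #|A|)%N).
    have m_lt : (n - #|A| < n)%N by rewrite ltn_subrL A_gt0 (leq_trans A_gt0 Alt).
    apply: le_trans (IHn _ m_lt T _ cardBA) _; rewrite subSn //.
    apply: ler_wpM2r; first by rewrite mulr_ge0 ?ler0n ?ltW ?th_pos.
    apply: le_trans (ratio_bound_step _) (ratio_bound_homo _).
    by rewrite -subSn // leq_subLR -add1n leq_add2r.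
  apply: le_trans (ler_wpM2l _ VBA) _; first by rewrite mulr_ge0 ?ler0n ?ltW ?th_pos.
  by rewrite le_eqVlt; apply/orP; left; apply/eqP; ring.
apply: le_trans (ler_sum _ term_le) _; rewrite -mulr_sumr -mulrA ler_wpM2l //.
  by apply: le_trans (ratio_bound_ge2 n).
pose g k := th k * th (n.+1 - k)%N.
rewrite (sum_cyclic_splits g xB); apply: le_trans (sum_two_cycle_perms_le _ xB) _.
  by move=> j /andP[j_gt0 jlt]; rewrite mulr_ge0 ?ltW ?th_pos // subn_gt0 -cardB.
rewrite cardB mulrCA ler_wpM2l ?ler0n // /split_ratio mulr_suml.
by rewrite le_eqVlt; apply/orP; left; apply/eqP/eq_bigr => j _; rewrite divfK ?gt_eqF ?th_pos.
Qed.


Lemma ratio_bound_bounded :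
  converges split_ratio 0 -> exists K : R, forall n, ratio_bound n <= K.
Proof.
move=> lim0; have [N ltN] := lim0 (1 / 2) (ltac:(by rewrite divr_gt0)).
pose K := ratio_bound N; exists K.
have K_ge2 : 2 <= K by apply: ratio_bound_ge2.
have stat k : ratio_bound (N + k) = K.
  elim: k => [|k IHk]; first by rewrite addn0.
  rewrite addnS /= IHk max_l //.
  have eps_le : split_ratio (N + k).+1 <= 1 / 2.
    apply/ltW/ltr_normlW; rewrite -(subr0 (split_ratio _)) ltN //.
    by rewrite -addnS leq_addr.
  apply: (@le_trans _ _ (K / 2 + K / 2)); last by rewrite -splitr.
  rewrite addrC lerD // ?ler_pdivlMr // ?mul1r //.
  by rewrite -mulrA ler_piMr -?ler_pdivlMr ?(le_trans _ K_ge2).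
move=> n; case: (leqP n N) => [nN|/ltnW Nn]; first exact: ratio_bound_homo.
by rewrite -(subnKC Nn) stat.
Qed.

End RatioBound.

Section Probabilities.

Variables (R : realFieldType) (th : nat -> R).
Hypothesis th_pos : forall n, (0 < n)%N -> 0 < th n.

Lemma cycles_inT n (s : 'S_n) : cycles_in [set: 'I_n] s = porbits s.
Proof. by apply/setP => c; rewrite inE subsetT andbT. Qed.

Lemma Rj0 n (s : 'S_n) : Rj 0 s = 0%N.
Proof.
apply/eqP; rewrite cards_eq0; apply/eqP/setP => c; rewrite !inE.
by apply/negP => /andP[/imsetP[z _ ->]]; rewrite (negPf (card_porbit_neq0 s z)).
Qed.

Lemma weight_cycle_weight n (s : 'S_n) : weight th s = cycle_weight th [set: 'I_n] s.
Proof.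
rewrite /cycle_weight cycles_inT.
rewrite (partition_big (fun c : {set 'I_n} => inord #|c| : 'I_n.+1) predT) //=.
have cyclesE (j : 'I_n.+1) :
    \prod_(c in porbits s | inord #|c| == j) th #|c| = th j ^+ Rj j s.
  rewrite (eq_bigl [in [set c in porbits s | #|c| == j]]) => [|c]; last first.
    rewrite !inE; congr (_ && _).
    have cn : (#|c| < n.+1)%N by rewrite ltnS (leq_trans (max_card _)) // card_ord.
    by rewrite -val_eqE /= inordK.
  rewrite (eq_bigr (fun=> th j)) => [|c]; last by rewrite inE => /andP[_ /eqP ->].
  by rewrite prodr_const.
rewrite (eq_bigr _ (fun j _ => cyclesE j)).
rewrite -(big_mkord xpredT (fun j => th j ^+ Rj j s)) big_ltn //.
by rewrite Rj0 expr0 mul1r.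
Qed.

Lemma sum_weight n : \sum_(s : 'S_n) weight th s = total_weight th [set: 'I_n].
Proof.
apply: eq_big => [s|s _]; last exact: weight_cycle_weight.
by apply/esym/subsetP => z; rewrite inE.
Qed.

Lemma ProbE n (A : pred 'S_n) :
  Prob th A = (\sum_(s | A s) weight th s) / total_weight th [set: 'I_n].
Proof.
rewrite -sum_weight /Prob /Pn /hn mulrA mulfV ?mul1r ?pnatr_eq0 -?lt0n ?fact_gt0 //.
by rewrite mulr_suml.
Qed.

Lemma Prob_le n (A B : pred 'S_n) : (forall s, B s -> A s) -> Prob th B <= Prob th A.
Proof.
move=> BA; rewrite !ProbE; apply: ler_wpM2r; first by rewrite invr_ge0 ltW ?total_weight_gt0.
rewrite [X in X <= _]big_mkcond [X in _ <= X]big_mkcond; apply: ler_sum => s _.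
case: (boolP (B s)) => Bs; first by rewrite (BA _ Bs).
by case: (A s); rewrite // weight_cycle_weight ltW ?cycle_weight_gt0.
Qed.

Lemma Prob_le1 n (A : pred 'S_n) : Prob th A <= 1.
Proof.
apply: le_trans (Prob_le (A := predT) _) _ => //.
by rewrite ProbE sum_weight mulfV ?gt_eqF ?total_weight_gt0.
Qed.

Lemma L1_full n (s : 'S_n.+1) : (L1 s == n.+1) = (s \in cyclic_perms [set: 'I_n.+1]).
Proof.
rewrite inE /L1 (_ : perm_on _ s = true) /=; last by apply/subsetP => z; rewrite inE.
apply/eqP/idP => [L1n | Tc]; last by rewrite (porbits_porbit _ Tc) ?inE // cardsT card_ord.
suff <- : porbit s ord0 = [set: 'I_n.+1] by apply: porbit_porbits.
by apply/eqP; rewrite eqEcard subsetT cardsT card_ord L1n ltnSn.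
Qed.

Lemma porbits_L1_full n (s : 'S_n.+1) : L1 s == n.+1 -> porbits s = [set [set: 'I_n.+1]].
Proof.
rewrite L1_full inE => /andP[_ Ts]; apply/setP => c; rewrite inE.
by apply/idP/eqP => [/imsetP[z _ ->]|->] //; apply: porbits_porbit; rewrite ?inE.
Qed.

Lemma Kc_L1_full n (s : 'S_n.+1) : L1 s == n.+1 -> Kc s = 1%N.
Proof. by move=> L1n; rewrite /Kc porbits_L1_full // cards1. Qed.

Lemma Rj_L1_full n j (s : 'S_n.+1) : (j <= n)%N -> L1 s == n.+1 -> Rj j s = 0%N.
Proof.
move=> jn L1n; apply/eqP; rewrite /Rj porbits_L1_full // cards_eq0; apply/eqP/setP => c.
rewrite !inE; apply/negP => /andP[/eqP -> /eqP]; rewrite cardsT card_ord => Ej.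
by move: jn; rewrite -Ej ltnn.
Qed.

Lemma Prob_L1_full_complement_le n :
  1 - Prob th (fun s : 'S_n.+1 => L1 s == n.+1) <= ratio_bound th n * split_ratio th n.+1.
Proof.
set P := Prob _ _; set e := _ * _.
have e_ge0 : 0 <= e.
  by rewrite mulr_ge0 ?split_ratio_ge0 ?(le_trans _ (ratio_bound_ge2 th n)).
have cardT : #|[set: 'I_n.+1]| = n.+1 by rewrite cardsT card_ord.
have PE : P = #|cyclic_perms [set: 'I_n.+1]|%:R * th n.+1 / total_weight th [set: 'I_n.+1].
  rewrite /P ProbE (eq_bigl [in cyclic_perms [set: 'I_n.+1]]) => [|s]; last exact: L1_full.
  rewrite (eq_bigr (fun=> th n.+1)) => [|s sc]; first by rewrite sumr_const mulr_natl.
  by rewrite weight_cycle_weight (cycle_weight_cyclic th (in_setT ord0) sc) cardT.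
have one_le : 1 <= (1 + e) * P.
  by rewrite PE mulrA ler_pdivlMr ?total_weight_gt0 // mul1r total_weight_le.
rewrite lerBlDr; apply: le_trans one_le _; rewrite mulrDl mul1r addrC lerD2r.
by rewrite -{2}[e]mulr1 ler_wpM2l // Prob_le1.
Qed.

Lemma Prob_L1_full_cvg : converges (split_ratio th) 0 ->
  converges (fun n => Prob th (fun s : 'S_n.+1 => L1 s == n.+1)) 1.
Proof.
move=> lim0 e e_gt0; have [K K_ge] := ratio_bound_bounded lim0.
have K_gt0 : 0 < K by apply: lt_le_trans (K_ge 0%N).
have [N ltN] := lim0 (e / K) (divr_gt0 e_gt0 K_gt0).
exists N => n Nn; rewrite ler0_norm ?subr_le0 ?Prob_le1 // opprB.
apply: le_lt_trans (Prob_L1_full_complement_le n) _.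
have eps_lt : split_ratio th n.+1 < e / K.
  by apply: ltr_normlW; rewrite -(subr0 (split_ratio _ _)) ltN // leqW.
apply: (@le_lt_trans _ _ (K * split_ratio th n.+1)).
  by apply: ler_wpM2r; [apply: split_ratio_ge0 | apply: K_ge].
by rewrite mulrC -ltr_pdivlMr.
Qed.

Lemma Prob_cvg_of_L1 (A : forall n, pred 'S_n) n0 :
  converges (split_ratio th) 0 ->
  (forall n (s : 'S_n.+1), (n0 <= n)%N -> L1 s == n.+1 -> A n.+1 s) ->
  converges (fun n => Prob th (A n)) 1.
Proof.
move=> lim0 L1A e e_gt0; have [N ltN] := Prob_L1_full_cvg lim0 e_gt0.
exists (maxn N n0).+1 => -[//|n]; rewrite ltnS geq_max => /andP[Nn n0n].
rewrite ler0_norm ?subr_le0 ?Prob_le1 // opprB.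
have := ltN n Nn; rewrite ler0_norm ?subr_le0 ?Prob_le1 // opprB; apply: le_lt_trans.
by rewrite lerD2l lerN2; apply: Prob_le => s; apply: L1A.
Qed.

End Probabilities.

Theorem theorem3p1 (R : realFieldType) (theta : nat -> R)
  (theta_pos : forall n : nat, (0 < n)%N -> 0 < theta n)
  (hyp : converges
           (fun n : nat => \sum_(1 <= j < n) theta j * theta (n - j)%N / theta n) 0) :
  converges (fun n : nat => Prob theta (fun s : 'S_n.+1 => L1 s == n.+1)) 1
  /\ converges (fun n : nat => Prob theta (fun s : 'S_n => Kc s == 1%N)) 1
  /\ (forall j : nat, converges (fun n : nat => Prob theta (fun s : 'S_n => Rj j s == 0%N)) 1).
Proof.
have lim0 : converges (split_ratio theta) 0 := hyp.
split; first exact: Prob_L1_full_cvg.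
split.
  apply: (@Prob_cvg_of_L1 _ _ theta_pos (fun n (s : 'S_n) => Kc s == 1%N) 0) => //.
  by move=> n s _ /Kc_L1_full ->.
move=> j; apply: (@Prob_cvg_of_L1 _ _ theta_pos (fun n (s : 'S_n) => Rj j s == 0%N) j) => //.
by move=> n s jn /(Rj_L1_full jn) ->.
Qed.
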